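(* For the deterministic many-to-one interference channel, if a collection $A\subseteq\Gamma$ of constraints is consistent, then it is compatible.
   Context: Deterministic many-to-one interference channel with nonnegative integer gains $n_{ii}$ ($0\le i\le K$), $n_{0i}$ ($1\le i\le K$). Notation: $(a)^+=\max(a,0)$; $U_k=\{i:1\le i\le K,\ n_{0i}-n_{ii}<k\le n_{0i}\}$ for $1\le k\le n_{00}$; $f_k(S)=\max(|U_k\cap S|,1)$; $f_{\rm free}(i)=(n_{ii}-n_{0i})^++(n_{0i}-n_{00})^+$, $f_{\rm free}(S)=\sum_{i\in S}f_{\rm free}(i)$. The constraint list $\Gamma$ consists of the individual constraints $I_i: r_i\le n_{ii}$ ($0\le i\le K$) and the sum-rate constraints $\Sigma_S: r_0+\sum_{i\in S}r_i\le f_{\rm free}(S)+\sum_{k=1}^{n_{00}}f_k(S)$ for nonempty $S\subseteq\{1,\dots,K\}$. A subset $A\subseteq\Gamma$ is consistent if there is a rate point $(r_0,\dots,r_K)$ that satisfies every constraint in $A$ with equality and violates no constraint of $\Gamma$. To each constraint $c$ associate $N_s(c),N_d(c)\subseteq\{1,\dots,n_{00}\}$: for $\Sigma_S$, $N_s=\{k:|U_k\cap S|\ge2\}$, $N_d=\{k:U_k\cap S=\varnothing\}$; for $I_i$, $i\ge1$, $N_s=\{k:i\in U_k\}$, $N_d=\varnothing$; for $I_0$, $N_s=\varnothing$, $N_d=\{1,\dots,n_{00}\}$. $A$ is compatible if for any $c,c'\in A$, $N_s(c)\cap N_d(c')=\varnothing$ and $N_s(c')\cap N_d(c)=\varnothing$.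 *)

From HB Require Import structures.
From mathcomp Require Import all_boot all_order all_algebra.
Set Implicit Arguments. Unset Strict Implicit. Unset Printing Implicit Defensive.
Import Order.TTheory GRing.Theory Num.Theory.

(* Channel parameters: K interferers indexed by 'I_K (paper's users 1..K),
   primary user 0.  n00 = n_{00}, nii i = n_{ii}, n0i i = n_{0i}. *)
Section Channel.
Variables (K n00 : nat) (nii n0i : 'I_K -> nat).

(* U_k = {i : n_{0i} - n_{ii} < k <= n_{0i}} (integer subtraction:
   n0i - nii < k  <->  n0i < k + nii). *)
Definition U (k : nat) : {set 'I_K} :=
  [set i | (n0i i < k + nii i) && (k <= n0i i)].

Definition fk (k : nat) (S : {set 'I_K}) : nat := maxn #|U k :&: S| 1.

(* (a)^+ on integers equals truncated subtraction on nat. *)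
Definition ffree (i : 'I_K) : nat := (nii i - n0i i) + (n0i i - n00).
Definition ffreeS (S : {set 'I_K}) : nat := \sum_(i in S) ffree i.

Inductive constr : Type :=
  | CI0 : constr
  | CI : 'I_K -> constr
  | CS : {set 'I_K} -> constr.

Definition inGamma (c : constr) : bool :=
  match c with
  | CS T => T != set0
  | _ => true
  end.

Definition rhs (c : constr) : nat :=
  match c with
  | CI0 => n00
  | CI i => nii i
  | CS T => ffreeS T + \sum_(1 <= k < n00.+1) fk k T
  end.

Local Open Scope ring_scope.
Definition lhs (R : realFieldType) (r0 : R) (r : 'I_K -> R) (c : constr) : R :=
  match c with
  | CI0 => r0
  | CI i => r i
  | CS T => r0 + \sum_(i in T) r i
  end.

Definition consistent (R : realFieldType) (A : constr -> Prop) : Prop :=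
  exists (r0 : R) (r : 'I_K -> R),
    (forall c, A c -> lhs r0 r c = (rhs c)%:R) /\
    (forall c, inGamma c -> lhs r0 r c <= (rhs c)%:R).
Local Close Scope ring_scope.

Definition inrange (k : nat) : bool := (1 <= k <= n00)%N.

Definition Ns (c : constr) (k : nat) : bool :=
  inrange k &&
  match c with
  | CI0 => false
  | CI i => i \in U k
  | CS T => (2 <= #|U k :&: T|)%N
  end.

Definition Nd (c : constr) (k : nat) : bool :=
  inrange k &&
  match c with
  | CI0 => true
  | CI _ => false
  | CS T => U k :&: T == set0
  end.

Definition compatible (A : constr -> Prop) : Prop :=
  forall c c', A c -> A c' ->
    (forall k, ~~ (Ns c k && Nd c' k)) /\ (forall k, ~~ (Ns c' k && Nd c k)).

End Channel.

From Pilot Require Import Defs.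
From HB Require Import structures.
From mathcomp Require Import all_boot all_order all_algebra zify.
Set Implicit Arguments. Unset Strict Implicit. Unset Printing Implicit Defensive.
Import Order.TTheory GRing.Theory Num.Theory.

(* Write cap X for the right-hand side of the sum-rate constraint Sigma_X; for
   X = set0 it equals n00, the bound of I_0.  A rate point violating no
   constraint therefore satisfies  r0 + sum_(i in X) r i <= cap X  for every X.
   Let r be tight on all constraints of a consistent A, and let c, c' in A clash
   at a level k, i.e. k in N_s(c) and k in N_d(c').  Then c' is I_0 or Sigma_T
   with U_k disjoint from T, so r is tight on the bound for some such T.
   - If c = I_i with i in U_k, then cap (i |: T) < cap T + n_ii
     (cap_setU1_lt), which contradicts the bound at i |: T.
   - If c = Sigma_S with at least two users of S in U_k, the users of S and T
     can be redistributed into sets X, Y with cap X + cap Y < cap S + cap T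
     (sum_exchange); adding the bounds at X and Y contradicts tightness at S, T.
   Both inequalities are proved level by level: f_k X counts the users of X
   active at level k, plus one if there is none (X does not "cover" k). *)

Lemma ltn_sum_nat m n (E1 E2 : nat -> nat) k :
  (forall i, m <= i < n -> E1 i <= E2 i) -> m <= k < n -> E1 k < E2 k ->
  \sum_(m <= i < n) E1 i < \sum_(m <= i < n) E2 i.
Proof.
move=> le12 kmn lt12.
have one : \sum_(m <= i < n) (i == k) = 1 by rewrite -big_mkcond big_nat1_eq kmn.
rewrite -addn1 -one -big_split big_nat [X in _ <= X]big_nat /=.
apply: leq_sum => i imn; case: eqP => [->|_]; first by rewrite addn1.
by rewrite addn0 le12.
Qed.

Lemma sum_window n a b :
  \sum_(1 <= k < n.+1) ((a < k + b) && (k <= a)) <= minn n a - (a - b).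
Proof.
elim: n => [|n IH]; first by rewrite big_geq.
by rewrite big_nat_recr //=; case: andP => [[? ?]|_]; lia.
Qed.

Definition rearranges (I : finType) (X Y S T : {set I}) : Prop :=
  forall i, (i \in X) + (i \in Y) = (i \in S) + (i \in T).

Lemma rearrangesC (I : finType) (X Y S T : {set I}) :
  rearranges X Y S T -> rearranges Y X S T.
Proof. by move=> XYST i; rewrite addnC XYST. Qed.

Lemma rearrangesI (I : finType) (Z X Y S T : {set I}) :
  rearranges X Y S T -> rearranges (Z :&: X) (Z :&: Y) (Z :&: S) (Z :&: T).
Proof. by move=> XYST i; rewrite !in_setI; case: (i \in Z) => /=. Qed.

Lemma big_rearrange (R : Type) (idx : R) (op : Monoid.com_law idx) (I : finType)
    (F : I -> R) (X Y S T : {set I}) :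
  rearranges X Y S T ->
  op (\big[op/idx]_(i in X) F i) (\big[op/idx]_(i in Y) F i) =
  op (\big[op/idx]_(i in S) F i) (\big[op/idx]_(i in T) F i).
Proof.
move=> XYST; rewrite !(big_mkcond (fun i => i \in _)) -!big_split /=.
apply: eq_bigr => i _; move: (XYST i).
by case: (i \in X); case: (i \in Y); case: (i \in S); case: (i \in T);
  rewrite //= ?Monoid.simpm.
Qed.

Lemma card_rearrange (I : finType) (Z X Y S T : {set I}) :
  rearranges X Y S T ->
  #|Z :&: X| + #|Z :&: Y| = #|Z :&: S| + #|Z :&: T|.
Proof.
by move=> XYST; rewrite -!sum1_card (big_rearrange addn _ (rearrangesI Z XYST)).
Qed.

Lemma notin_setI0 (I : finType) (A B : {set I}) x :
  A :&: B = set0 -> x \in A -> x \notin B.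
Proof. by move=> AB0 xA; apply/negP => xB; have := in_setI x A B; rewrite AB0 xA xB inE. Qed.

Section Channel.
Variables (K n00 : nat) (nii n0i : 'I_K -> nat).

Local Notation U := (U nii n0i).
Local Notation fk := (fk nii n0i).
Local Notation ffree := (ffree n00 nii n0i).

Definition cap (X : {set 'I_K}) : nat :=
  ffreeS n00 nii n0i X + \sum_(1 <= k < n00.+1) fk k X.

Lemma cap_set0 : cap set0 = n00.
Proof.
rewrite /cap /ffreeS big_set0 add0n.
rewrite (eq_bigr (fun _ => 1)); last by move=> k _; rewrite /fk setI0 cards0.
by rewrite sum_nat_const_nat muln1 subn1.
Qed.

Definition covered (X : {set 'I_K}) (k : nat) : bool := U k :&: X != set0.

Lemma coveredP (X : {set 'I_K}) k : reflect (exists2 x, x \in U k & x \in X) (covered X k).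
Proof.
rewrite /covered; apply: (iffP (set0Pn _)) => [[x]|[x xU xX]].
  by rewrite in_setI => /andP[xU xX]; exists x.
by exists x; rewrite in_setI xU.
Qed.

Lemma fk_covered k (X : {set 'I_K}) : fk k X = #|U k :&: X| + ~~ covered X k.
Proof.
by rewrite /Defs.fk /covered negbK -cards_eq0; case: #|_| => [|n]; rewrite ?addn0.
Qed.

Lemma fk_pair_le (X Y S T : {set 'I_K}) k : rearranges X Y S T ->
  (covered S k -> covered X k) -> (covered T k -> covered Y k) ->
  fk k X + fk k Y <= fk k S + fk k T.
Proof.
move=> XYST /implyP SX /implyP TY; rewrite !fk_covered.
have := card_rearrange (U k) XYST; move: SX TY.
by case: (covered X k); case: (covered Y k); case: (covered S k);
  case: (covered T k) => //= _ _; lia.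
Qed.

Lemma fk_pair_lt (X Y S T : {set 'I_K}) k : rearranges X Y S T ->
  covered X k -> covered Y k -> ~~ covered T k ->
  fk k X + fk k Y < fk k S + fk k T.
Proof.
move=> XYST cX cY /negbTE cT; rewrite !fk_covered cX cY cT /=.
by have := card_rearrange (U k) XYST; case: (covered S k) => /=; lia.
Qed.

Definition dominated (X Y S T : {set 'I_K}) (k : nat) : Prop :=
  (covered S k -> covered X k) /\ (covered T k -> covered Y k).

(* The exchange inequality for cap, from the level-wise comparisons; the free
   part of cap is additive and hence unchanged by redistribution. *)
Lemma cap_exchange (X Y S T : {set 'I_K}) k : rearranges X Y S T ->
  (forall k', 1 <= k' <= n00 -> dominated X Y S T k' \/ dominated Y X S T k') ->
  1 <= k <= n00 -> covered X k -> covered Y k -> ~~ covered T k ->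
  cap X + cap Y < cap S + cap T.
Proof.
move=> XYST dom k_range cX cY cT.
have free_eq := big_rearrange addn ffree XYST.
rewrite /cap /ffreeS addnACA [X in _ < X]addnACA free_eq ltn_add2l -!big_split.
apply: (ltn_sum_nat (k := k)) => //; last exact: fk_pair_lt.
move=> k' /dom[[SX TY]|[SY TX]] /=; first exact: fk_pair_le.
by rewrite addnC; apply: fk_pair_le (rearrangesC XYST) SY TX.
Qed.

Lemma ffree_levels i k : k <= n00 -> i \in U k ->
  ffree i + \sum_(1 <= k' < n00.+1) (i \in U k') <= nii i.
Proof.
move=> k_le; rewrite inE => /andP[? ?].
have window := sum_window n00 (n0i i) (nii i).
under eq_bigr => k' _ do rewrite inE.
rewrite /Defs.ffree; lia.
Qed.

Lemma fk_setU1 k i (T : {set 'I_K}) : fk k (i |: T) <= fk k T + (i \in U k).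
Proof.
have card_le : #|U k :&: (i |: T)| <= #|U k :&: T| + (i \in U k).
  rewrite (cardD1 i) in_setI setU11 andbT addnC leq_add2r subset_leq_card //.
  apply/subsetP => x; rewrite !inE => /andP[xi /andP[xU /orP[xe|xT]]].
    by rewrite xe in xi.
  by rewrite xU xT.
by rewrite /Defs.fk; lia.
Qed.

Lemma cap_setU1_lt i (T : {set 'I_K}) k : 1 <= k <= n00 -> i \in U k -> U k :&: T = set0 ->
  cap (i |: T) < cap T + nii i.
Proof.
move=> k_range iU T_off.
pose active := \sum_(1 <= k' < n00.+1) (i \in U k').
have budget : ffree i + active <= nii i := ffree_levels (proj2 (andP k_range)) iU.
have levels : \sum_(1 <= k' < n00.+1) fk k' (i |: T) <
              \sum_(1 <= k' < n00.+1) fk k' T + active.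
  rewrite -big_split; apply: (ltn_sum_nat (k := k)) => // [k' _|]; first exact: fk_setU1.
  have : #|U k :&: [set i]| <= 1 by rewrite -(cards1 i) subset_leq_card // subsetIr.
  by rewrite /Defs.fk setIUr T_off setU0 cards0 iU /=; lia.
by rewrite /cap /ffreeS big_setU1 ?(notin_setI0 T_off iU) //=; lia.
Qed.

(* All levels at which x is active lie strictly above k. *)
Definition above (k : nat) (x : 'I_K) : bool := k + nii x <= n0i x.

(* The active levels of a user form an interval (n0i - nii, n0i]; the next
   four facts are the interval arithmetic used by the exchange constructions. *)
Lemma active_not_above x k k' : x \in U k' -> k' <= k -> ~~ above k x.
Proof. by rewrite inE /above => /andP[? ?] ?; lia. Qed.

Lemma active_between x k k' : x \in U k' -> k <= k' -> ~~ above k x -> x \in U k.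
Proof. by rewrite !inE /above => /andP[? ?] ? ?; apply/andP; split; lia. Qed.

Lemma active_down p j k k' : p \in U k -> j \in U k -> 1 <= k' -> p \in U k' ->
  k' <= k -> n0i j - nii j <= n0i p - nii p -> j \in U k'.
Proof. by rewrite !inE => /andP[? ?] /andP[? ?] ? /andP[? ?] ? ?; apply/andP; split; lia. Qed.

Lemma active_up p j k k' : p \in U k -> j \in U k -> p \in U k' ->
  k <= k' -> n0i p <= n0i j -> j \in U k'.
Proof. by rewrite !inE => /andP[? ?] /andP[? ?] /andP[? ?] ? ?; apply/andP; split; lia. Qed.

(* Two redistributions, depending on how the active intervals of j1
   and j2 are positioned, beat (S, T). *)
Section SumExchange.
Variables (S T : {set 'I_K}) (k : nat) (j1 j2 : 'I_K).
Hypothesis k_range : 1 <= k <= n00.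
Hypothesis T_off : U k :&: T = set0.
Hypotheses (j1U : j1 \in U k) (j1S : j1 \in S) (j2U : j2 \in U k) (j2S : j2 \in S).
Hypothesis j12 : j1 != j2.
Hypothesis j2_max : forall q, q \in U k -> q \in S -> n0i q <= n0i j2.
Hypothesis j1_min : forall q, q \in U k -> q \in S -> q != j2 ->
  n0i j1 - nii j1 <= n0i q - nii q.

(* The interval of j1 starts no later than that of j2: T and S exchange their
   users lying above k, and j2 moves from S to T. *)
Lemma exchange_staggered : n0i j1 - nii j1 <= n0i j2 - nii j2 ->
  exists X Y, rearranges X Y S T /\ cap X + cap Y < cap S + cap T.
Proof.
move=> stag.
have j2T := notin_setI0 T_off j2U.
have j1_low : ~~ above k j1 := active_not_above j1U (leqnn k).
have j2_low : ~~ above k j2 := active_not_above j2U (leqnn k).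
pose X := [set x in S | ~~ above k x & x != j2] :|: [set x in T | above k x].
pose Y := j2 |: ([set x in T | ~~ above k x] :|: [set x in S | above k x]).
have XYST : rearranges X Y S T.
  move=> i; rewrite !inE; have [->|ne] := eqVneq i j2.
    by rewrite j2S (negbTE j2T) (negbTE j2_low).
  by case: (i \in S); case: (i \in T); case: (above k i).
have j1X : j1 \in X by rewrite !inE j1S j1_low j12.
have j2Y : j2 \in Y by rewrite !inE eqxx.
exists X, Y; split => //; apply: (cap_exchange XYST _ k_range); last first.
- by rewrite /covered T_off eqxx.
- by apply/coveredP; exists j2.
- by apply/coveredP; exists j1.
move=> k' /andP[k'_pos k'_le]; case: (ltngtP k' k) => [lt|gt|->].
- left; split; case/coveredP => x xU' xX; apply/coveredP;
      have x_low := active_not_above xU' (ltnW lt).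
    have [ej2|ne] := eqVneq x j2.
      exists j1 => //; rewrite ej2 in xU'.
      exact: active_down j2U j1U k'_pos xU' (ltnW lt) stag.
    by exists x; rewrite // !inE xX x_low ne.
  by exists x; rewrite // !inE xX x_low orbT.
- right; split; case/coveredP => x xU' xX; apply/coveredP.
    have [x_hi|x_low] := boolP (above k x).
      by exists x; rewrite // !inE xX x_hi !orbT.
    have xU := active_between xU' (ltnW gt) x_low.
    by exists j2 => //; apply: active_up xU j2U xU' (ltnW gt) (j2_max xU xX).
  have x_hi : above k x.
    apply: contraT => x_low.
    by have := notin_setI0 T_off (active_between xU' (ltnW gt) x_low); rewrite xX.
  by exists x; rewrite // !inE xX x_hi orbT.
- left; split; first by move=> _; apply/coveredP; exists j1.
  by rewrite /covered T_off eqxx.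
Qed.

(* The interval of j2 starts before all the others: the users of S active at
   k, except j2, move to T; j2 alone keeps covering every level they covered. *)
Lemma exchange_nested : n0i j2 - nii j2 < n0i j1 - nii j1 ->
  exists X Y, rearranges X Y S T /\ cap X + cap Y < cap S + cap T.
Proof.
move=> nest.
pose Q := (U k :&: S) :\ j2.
have j2Q : j2 \notin Q by rewrite /Q in_setD1 eqxx.
have j1Q : j1 \in Q by rewrite /Q in_setD1 in_setI j12 j1U j1S.
have QS x : x \in Q -> x \in S by rewrite /Q in_setD1 in_setI => /and3P[].
have QT x : x \in Q -> x \notin T.
  by rewrite /Q in_setD1 in_setI => /and3P[_ xU _]; apply: notin_setI0 T_off xU.
have j2_reaches x k' : x \in Q -> x \in U k' -> 1 <= k' -> j2 \in U k'.
  rewrite /Q in_setD1 in_setI => /and3P[xj2 xU xS] xU' k'_pos.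
  have [le|lt] := leqP k' k; last exact: active_up xU j2U xU' (ltnW lt) (j2_max xU xS).
  apply: (active_down xU j2U k'_pos xU' le).
  exact: leq_trans (ltnW nest) (j1_min xU xS xj2).
have XYST : rearranges (S :\: Q) (T :|: Q) S T.
  move=> i; rewrite in_setD in_setU; case: (boolP (i \in Q)) => [iQ|_] /=.
    by rewrite orbT (QS i iQ) (negbTE (QT i iQ)).
  by rewrite orbF.
exists (S :\: Q), (T :|: Q); split => //; apply: (cap_exchange XYST _ k_range).
- move=> k' /andP[k'_pos _]; left; split; case/coveredP => x xU' xX; apply/coveredP.
    have [xQ|xQ] := boolP (x \in Q).
      by exists j2; [exact: j2_reaches xQ xU' k'_pos | rewrite in_setD j2Q j2S].
    by exists x; rewrite // in_setD xQ xX.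
  by exists x; rewrite // in_setU xX.
- by apply/coveredP; exists j2; rewrite // in_setD j2Q j2S.
- by apply/coveredP; exists j1; rewrite // in_setU j1Q orbT.
- by rewrite /covered T_off eqxx.
Qed.

End SumExchange.

Lemma sum_exchange (S T : {set 'I_K}) k : 1 <= k <= n00 ->
  1 < #|U k :&: S| -> U k :&: T = set0 ->
  exists X Y, rearranges X Y S T /\ cap X + cap Y < cap S + cap T.
Proof.
move=> k_range twoS T_off.
have [x xUS] : exists x, x \in U k :&: S by apply/set0Pn; rewrite -card_gt0 ltnW.
have [j2 j2US j2_max] := @arg_maxnP _ x (fun q => q \in U k :&: S) n0i xUS.
have [y yQ] : exists y, y \in (U k :&: S) :\ j2.
  by apply/set0Pn; rewrite -card_gt0; move: twoS; rewrite (cardsD1 j2) j2US.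
have [j1 j1Q j1_min] :=
  @arg_minnP _ y (fun q => q \in (U k :&: S) :\ j2) (fun q => n0i q - nii q) yQ.
move: j2US j1Q; rewrite in_setD1 !in_setI => /andP[j2U j2S] /and3P[j12 j1U j1S].
have {}j2_max q : q \in U k -> q \in S -> n0i q <= n0i j2.
  by move=> qU qS; apply: j2_max; rewrite in_setI qU.
have {}j1_min q : q \in U k -> q \in S -> q != j2 -> n0i j1 - nii j1 <= n0i q - nii q.
  by move=> qU qS qj2; apply: j1_min; rewrite in_setD1 in_setI qj2 qU.
have [stag|nest] := leqP (n0i j1 - nii j1) (n0i j2 - nii j2).
  exact: exchange_staggered k_range T_off j1U j1S j2U j2S j12 j2_max stag.
exact: exchange_nested T_off j1U j1S j2U j2S j12 j2_max j1_min nest.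
Qed.

End Channel.

Section RatePoint.
Local Open Scope ring_scope.
Variables (R : realFieldType) (K n00 : nat) (nii n0i : 'I_K -> nat).
Variables (r0 : R) (r : 'I_K -> R).

Local Notation cap := (cap n00 nii n0i).
Local Notation U := (U nii n0i).

Lemma tight_off_level (c : constr K) k :
  lhs r0 r c = (rhs n00 nii n0i c)%:R -> Nd n00 nii n0i c k ->
  exists T, U k :&: T = set0 /\ r0 + \sum_(i in T) r i = (cap T)%:R.
Proof.
case: c => [|i|T] tight /andP[_ //] T_off.
  by exists set0; rewrite setI0 big_set0 addr0 cap_set0.
by exists T; split; [apply/eqP|].
Qed.

Hypothesis in_region :
  forall c, inGamma c -> lhs r0 r c <= (rhs n00 nii n0i c)%:R.

Lemma sum_rate_bound (X : {set 'I_K}) : r0 + \sum_(i in X) r i <= (cap X)%:R.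
Proof.
have [->|X0] := eqVneq X set0; last exact: (@in_region (CS X) X0).
by rewrite big_set0 addr0 cap_set0; apply: (@in_region (CI0 K)).
Qed.

Lemma individual_clash i T k : (1 <= k <= n00)%N -> i \in U k -> U k :&: T = set0 ->
  r i = (nii i)%:R -> r0 + \sum_(j in T) r j = (cap T)%:R -> False.
Proof.
move=> k_range iU T_off tight_i tight_T.
have := sum_rate_bound (i |: T).
rewrite big_setU1 ?(notin_setI0 T_off iU) //= addrCA tight_T tight_i -natrD ler_nat.
by have := cap_setU1_lt k_range iU T_off; lia.
Qed.

Lemma sum_clash S T k : (1 <= k <= n00)%N -> (1 < #|U k :&: S|)%N -> U k :&: T = set0 ->
  r0 + \sum_(j in S) r j = (cap S)%:R -> r0 + \sum_(j in T) r j = (cap T)%:R -> False.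
Proof.
move=> k_range twoS T_off tight_S tight_T.
have [X [Y [XYST lt_cap]]] := sum_exchange k_range twoS T_off.
have := lerD (sum_rate_bound X) (sum_rate_bound Y).
rewrite addrACA (big_rearrange +%R r XYST) -addrACA tight_S tight_T -!natrD ler_nat.
by lia.
Qed.

End RatePoint.

Theorem lemma3 (R : realFieldType) (K n00 : nat) (nii n0i : 'I_K -> nat)
    (A : constr K -> Prop) :
  (forall c, A c -> inGamma c) ->
  consistent n00 nii n0i R A ->
  compatible n00 nii n0i A.
Proof.
move=> _ [r0 [r [tight in_region]]].
have no_clash c c' k : A c -> A c' -> ~~ (Ns n00 nii n0i c k && Nd n00 nii n0i c' k).
  move=> Ac Ac'; apply/negP => /andP[/andP[k_range Ns_c] Nd_c'].
  have [T [T_off tight_T]] := tight_off_level (tight _ Ac') Nd_c'.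
  case: c Ac Ns_c => [|i|S] /tight /= tight_c // Ns_c.
    exact: (individual_clash in_region k_range Ns_c T_off tight_c tight_T).
  exact: (sum_clash in_region k_range Ns_c T_off tight_c tight_T).
by move=> c c' Ac Ac'; split=> k; apply: no_clash.
Qed.
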